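(* Let $q$ be a prime power and $n,k,l$ positive integers. The extreme points of the $l$-chain profile polytope of $k$-Sperner families of subspaces of $\mathbb{F}_q^n$ are the $l$-chain profile vectors of the families that are unions of at most $k$ full levels.
   Context: Level $i$ is the set of all $i$-dimensional subspaces of $\mathbb{F}_q^n$, $0\le i\le n$. A family $\mathcal{F}$ of subspaces is $k$-Sperner if it contains no chain $F_1\subsetneq F_2\subsetneq\dots\subsetneq F_{k+1}$ of $k+1$ members. The $l$-chain profile vector of a family $\mathcal{F}$ of subspaces is the vector in $\mathbb{R}^{\binom{n+1}{l}}$ whose coordinates are indexed by sets $\{i_1<i_2<\dots<i_l\}\subseteq\{0,\dots,n\}$, the coordinate for $\{i_1,\dots,i_l\}$ being the number of chains $F_1\subsetneq\dots\subsetneq F_l$ with $F_j\in\mathcal{F}$ and $\dim F_j=i_j$ for all $j$. The $l$-chain profile polytope of $k$-Sperner families is the convex hull of the $l$-chain profile vectors of all $k$-Sperner families of subspaces of $\mathbb{F}_q^n$. *)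

From HB Require Import structures.
From mathcomp Require Import all_boot all_order all_algebra all_field.
From mathcomp Require Import reals.
Set Implicit Arguments. Unset Strict Implicit. Unset Printing Implicit Defensive.
Import Order.TTheory GRing.Theory Num.Theory.
Local Open Scope ring_scope.
Import VectorInternalTheory.

(* The finite field F_q is represented by an arbitrary finite field F
   (q = #|F| is then an arbitrary prime power).  Subspaces of F_q^n are
   the elements of {vspace 'rV[F]_n}, which we equip with a finType
   structure (it is a subtype of a finite matrix type). *)
HB.instance Definition _ (F : finFieldType) (vT : vectType F) :=
  [Countable of {vspace vT} by <:].
HB.instance Definition _ (F : finFieldType) (vT : vectType F) :=
  [Finite of {vspace vT} by <:].

Section Profiles.
Variables (F : finFieldType) (n : nat).

Definition subsp := {vspace 'rV[F]_n}.

Definition psubv (U V : subsp) : bool := (U <= V)%VS && (U != V).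

Definition is_chain (m : nat) (c : 'I_m -> subsp) : bool :=
  [forall i : 'I_m, forall j : 'I_m, (i.+1 == j :> nat) ==> psubv (c i) (c j)].

Definition k_Sperner (k : nat) (Fam : {set subsp}) : Prop :=
  ~ exists c : 'I_k.+1 -> subsp, (forall i, c i \in Fam) /\ is_chain c.

Definition lsets (l : nat) := {S : {set 'I_n.+1} | #|S| == l}.

Definition chain_count (l : nat) (Fam : {set subsp}) (S : lsets l) : nat :=
  #|[set c : {ffun 'I_l -> subsp} |
      [&& [forall j, c j \in Fam], is_chain c &
          [forall j : 'I_l, \dim (c j) == val (nth ord0 (enum (val S)) j)]]]|.

Definition profile (R : realType) (l : nat) (Fam : {set subsp})
  : {ffun lsets l -> R} := [ffun S => (chain_count Fam S)%:R].

Definition profile_polytope (R : realType) (k l : nat)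
  (x : {ffun lsets l -> R}) : Prop :=
  exists w : {ffun {set subsp} -> R},
    [/\ forall Fam, 0 <= w Fam,
        forall Fam, ~ k_Sperner k Fam -> w Fam = 0,
        \sum_Fam w Fam = 1 &
        forall S, x S = \sum_Fam w Fam * profile R l Fam S].

Definition union_of_levels (k : nat) (Fam : {set subsp}) : Prop :=
  exists L : {set 'I_n.+1},
    (#|L| <= k)%N /\ Fam = [set U : subsp | [exists i in L, \dim U == val i]].

End Profiles.

Definition extreme_point (R : realType) (I : finType)
  (P : {ffun I -> R} -> Prop) (x : {ffun I -> R}) : Prop :=
  P x /\ forall (y z : {ffun I -> R}) (t : R), P y -> P z -> 0 < t < 1 ->
    (forall i, x i = t * y i + (1 - t) * z i) -> y = z.

From HB Require Import structures.
From mathcomp Require Import all_boot all_order all_algebra all_field.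
From mathcomp Require Import reals.
From mathcomp Require Import lra.
Set Implicit Arguments. Unset Strict Implicit. Unset Printing Implicit Defensive.
Import Order.TTheory GRing.Theory Num.Theory.
Local Open Scope ring_scope.

(* A frame (ordered basis) b of F^n determines the maximal flag of the spans of its initial
   segments, and GL_n(F) acts transitively on frames, so every chain of subspaces of a given
   dimension type S lies in the flags of equally many frames.  Double counting then writes
   the profile of any family Fam as the average, over all frames b, of the profile of the
   union of the levels at which the flag of b meets Fam; when Fam is k-Sperner, these are
   unions of at most k levels.  Hence every point of the polytope is a convex combination of
   profiles of unions of at most k levels, and an extreme point must be one of them.
   Conversely, the S-coordinate of the profile of a union of levels is 0 or the number of
   all chains of type S, i.e. one of the two bounds of that coordinate over the polytope, so
   this profile is a vertex of a box containing the polytope. *)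

Section Mixtures.
Variables (R : realFieldType) (I J : finType).
Implicit Types (A : I -> Prop) (w : I -> R) (v : I -> {ffun J -> R}).

Definition distr_on A w : Prop :=
  [/\ forall i, 0 <= w i, \sum_i w i = 1 & forall i, w i != 0 -> A i].

Definition mixture v w : {ffun J -> R} := [ffun j => \sum_i w i * v i j].

(* The weights conditioned on [i != i0]; meaningful only when [w i0 != 1]. *)
Definition cond_neq w (i0 : I) : I -> R :=
  fun i => if i == i0 then 0 else w i / (1 - w i0).

Lemma distr_on_sub A (B : I -> Prop) w :
  (forall i, A i -> B i) -> distr_on A w -> distr_on B w.
Proof. by move=> AB [w0 w1 wA]; split=> // i /wA /AB. Qed.

Lemma distr_on_dirac A i0 : A i0 -> distr_on A (fun i => (i == i0)%:R).
Proof.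
move=> Ai0; split=> [i | | i]; first by rewrite ler0n.
  rewrite (bigD1 i0) //= eqxx big1 ?addr0 // => i ne.
  by apply/eqP; rewrite pnatr_eq0 eqb0.
by rewrite pnatr_eq0 eqb0 negbK => /eqP ->.
Qed.

Lemma mixture_dirac v i0 : mixture v (fun i => (i == i0)%:R) = v i0.
Proof.
apply/ffunP => j; rewrite ffunE (bigD1 i0) //= eqxx mul1r big1 ?addr0 // => i ne.
by apply/eqP; rewrite mulf_eq0 pnatr_eq0 eqb0 ne.
Qed.

Lemma mixture_bound A v w j (u : R) :
  distr_on A w -> (forall i, A i -> 0 <= v i j <= u) -> 0 <= mixture v w j <= u.
Proof.
move=> [w0 w1 wA] vu; rewrite ffunE -[u]mul1r -w1 mulr_suml.
apply/andP; split; [apply: sumr_ge0 | apply: ler_sum] => i _;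
  have [-> | /wA /vu /andP[v0 vui]] := eqVneq (w i) 0; rewrite ?mul0r //.
- exact: mulr_ge0.
- exact: ler_wpM2l.
Qed.

Lemma distr_on_le1 A w i0 : distr_on A w -> w i0 <= 1.
Proof.
case=> w0 w1 _; rewrite -w1 (bigD1 i0) //= lerDl.
by apply: sumr_ge0 => i _; apply: w0.
Qed.

Lemma mixture_weight1 A v w i0 : distr_on A w -> w i0 = 1 -> mixture v w = v i0.
Proof.
case=> w0 w1 _ wi0; rewrite -mixture_dirac; apply/ffunP => j; rewrite !ffunE /=.
apply: eq_bigr => i _; congr (_ * _).
have [-> // | ne] := eqVneq i i0.
have rest0 : \sum_(k | k != i0) w k = 0 by move: w1; rewrite (bigD1 i0) //= wi0; lra.
by apply: (psumr_eq0P _ rest0) => // k _; apply: w0.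
Qed.

Lemma mixture_cond_neq v w i0 j : w i0 != 1 ->
  mixture v w j = w i0 * v i0 j + (1 - w i0) * mixture v (cond_neq w i0) j.
Proof.
move=> ne1; have nz : 1 - w i0 != 0 by rewrite subr_eq0 eq_sym.
rewrite !ffunE (bigD1 i0) //= [in RHS](bigD1 i0) //= /cond_neq eqxx mul0r add0r.
congr (_ + _); rewrite mulr_sumr; apply: eq_bigr => i /negPf ->.
by rewrite mulrA [(1 - _) * _]mulrC divfK.
Qed.

Lemma distr_on_cond_neq A w i0 :
  distr_on A w -> w i0 != 1 -> distr_on A (cond_neq w i0).
Proof.
move=> dw ne1; have [w0 w1 wA] := dw.
split=> [i | | i]; rewrite /cond_neq /=.
- by case: ifP => // _; rewrite divr_ge0 ?w0 ?subr_ge0 ?(distr_on_le1 i0 dw).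
- rewrite (bigD1 i0) //= eqxx add0r.
  rewrite (eq_bigr (fun i => w i / (1 - w i0))) => [|i /negPf -> //].
  rewrite -mulr_suml; have -> : \sum_(i | i != i0) w i = 1 - w i0.
    by move: w1; rewrite (bigD1 i0) //= => <-; rewrite addrAC subrr add0r.
  by rewrite divff // subr_eq0 eq_sym.
- by case: ifP => _; rewrite ?eqxx // mulf_eq0 negb_or => /andP[/wA].
Qed.

Lemma sum_card_fibers (T : finType) (A : {set T}) (f : T -> I) (g : I -> R) :
  \sum_(x in A) g (f x) = \sum_i #|[set x in A | f x == i]|%:R * g i.
Proof.
rewrite (partition_big f predT) //=; apply: eq_bigr => i _.
rewrite (eq_bigr (fun _ => g i)) => [|x /andP[_ /eqP ->] //].
by rewrite -big_set sumr_const mulr_natl.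
Qed.

End Mixtures.

Section MixtureComposition.
Variables (R : realFieldType) (I I' J : finType).

Lemma mixture_comp (u : I' -> {ffun J -> R}) (mu : I' -> I -> R)
    (v : I -> {ffun J -> R}) (w : I' -> R) :
  (forall a, u a = mixture v (mu a)) ->
  mixture u w = mixture v (fun i => \sum_a w a * mu a i).
Proof.
move=> uE; apply/ffunP => j; rewrite !ffunE.
under eq_bigr => a _ do rewrite uE ffunE mulr_sumr.
rewrite exchange_big; apply: eq_bigr => i _; rewrite mulr_suml.
by apply: eq_bigr => a _; rewrite mulrA.
Qed.

Lemma distr_on_comp (A' : I' -> Prop) (A : I -> Prop) (w : I' -> R)
    (mu : I' -> I -> R) :
  distr_on A' w -> (forall a, A' a -> distr_on A (mu a)) ->
  distr_on A (fun i => \sum_a w a * mu a i).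
Proof.
move=> [w0 w1 wA'] muA.
have term_ge0 a i : 0 <= w a * mu a i.
  have [-> | /wA' /muA [mu0 _ _]] := eqVneq (w a) 0; first by rewrite mul0r.
  by rewrite mulr_ge0.
split=> [i | | i nz].
- exact: sumr_ge0.
- rewrite exchange_big /= -[RHS]w1; apply: eq_bigr => a _; rewrite -mulr_sumr.
  have [-> | /wA' /muA [_ mu1 _]] := eqVneq (w a) 0; first by rewrite mul0r.
  by rewrite mu1 mulr1.
- have [a /andP[_]] := psumr_neq0P (fun a _ => term_ge0 a i) (elimN eqP nz).
  rewrite lt0r mulf_eq0 negb_or => /andP[/andP[/wA' /muA [_ _ muA_a] /muA_a //] _].
Qed.
End MixtureComposition.

Section ExtremePoints.
Variables (R : realType) (J : finType) (P : {ffun J -> R} -> Prop).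

Lemma extreme_box_vertex (u : J -> R) x :
  P x -> (forall y, P y -> forall j, 0 <= y j <= u j) ->
  (forall j, x j = 0 \/ x j = u j) -> extreme_point P x.
Proof.
move=> Px box vx; split=> // y z t Py Pz /andP[t0 t1] xE; apply/ffunP => j.
have /andP[y0 yu] := box y Py j; have /andP[z0 zu] := box z Pz j.
by case: (vx j) (xE j) => ->; nra.
Qed.

Lemma extreme_mixture (I : finType) (A : I -> Prop) (v : I -> {ffun J -> R}) w x :
  (forall w', distr_on A w' -> P (mixture v w')) ->
  extreme_point P x -> distr_on A w -> x = mixture v w -> exists2 i, A i & x = v i.
Proof.
move=> Pmix [_ ext] dw xE; subst x; have [w0 w1 wA] := dw.
have [i0 /andP[_ wi0]] : exists i0, true && (0 < w i0).
  by apply: psumr_neq0P => [i _ | ]; [exact: w0 | rewrite w1; apply/eqP/oner_neq0].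
exists i0; first by apply: wA; rewrite gt_eqF.
have [wi1 | ne1] := eqVneq (w i0) 1; first exact: mixture_weight1 dw wi1.
have Pv : P (v i0) by rewrite -mixture_dirac; apply/Pmix/distr_on_dirac/wA; rewrite gt_eqF.
have vE : v i0 = mixture v (cond_neq w i0).
  apply: (ext _ _ (w i0) Pv (Pmix _ (distr_on_cond_neq dw ne1))) => [| j].
    by rewrite wi0 lt_def eq_sym ne1 (distr_on_le1 i0 dw).
  exact: mixture_cond_neq ne1.
apply/ffunP => j; rewrite (mixture_cond_neq _ j ne1) -vE.
by rewrite -mulrDl addrC subrK mul1r.
Qed.
End ExtremePoints.

Section AdaptedBases.
Variables (K : fieldType) (vT : vectType K).
Implicit Types (X : seq vT) (U : {vspace vT}).
Local Notation subv_rel := (fun U W : {vspace vT} => (U <= W)%VS).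

Lemma dim_span_take X i : free X -> (i <= size X)%N -> \dim <<take i X>> = i.
Proof.
by rewrite -{1}(cat_take_drop i X) => /catl_free /eqnP -> le_iX; rewrite size_takel.
Qed.

Lemma span_take_subv X i j : (i <= j)%N -> (<<take i X>> <= <<take j X>>)%VS.
Proof.
by move=> le_ij; apply: sub_span => x; rewrite -(subnKC le_ij) takeD mem_cat => ->.
Qed.

Lemma basis_extend X U : free X -> (<<X>> <= U)%VS -> exists Y, basis_of U (X ++ Y).
Proof.
move=> freeX sXU; exists (vbasis (U :\: <<X>>)).
have [/eqP spanY freeY] := andP (vbasisP (U :\: <<X>>)).
rewrite /basis_of cat_free freeX freeY span_cat spanY /=; apply/andP; split.
  by rewrite addvC addv_diff (addv_idPl sXU).
by apply/directv_addP; rewrite capvC capv_diff.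
Qed.

Lemma adapted_basis_from X us : free X -> path subv_rel <<X>>%VS us ->
  exists Y, basis_of fullv (X ++ Y) /\
    {in us, forall U, <<take (\dim U) (X ++ Y)>>%VS = U}.
Proof.
elim: us X => [|U us IHus] X freeX /=.
  by move=> _; have [Y bY] := basis_extend freeX (subvf _); exists Y.
case/andP=> sXU pathU.
have [Y1 /andP[/eqP spanXY1 freeXY1]] := basis_extend freeX sXU.
rewrite -spanXY1 in pathU; have [Y2 [bXY adY2]] := IHus _ freeXY1 pathU.
exists (Y1 ++ Y2); rewrite catA; split=> // W; rewrite inE => /predU1P[-> | /adY2 //].
by rewrite -spanXY1 (eqnP freeXY1) take_size_cat.
Qed.

Lemma adapted_basis us : sorted subv_rel us ->
  exists2 X, basis_of fullv X & {in us, forall U, <<take (\dim U) X>>%VS = U}.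
Proof.
move=> sorted_us; have [|Y [bY adY]] := @adapted_basis_from [::] us (nil_free _).
  by case: us sorted_us => //= U us ->; rewrite span_nil sub0v.
by exists Y.
Qed.

Lemma basis_transitive X Y : basis_of fullv X -> basis_of fullv Y ->
  exists2 f : 'End(vT), lker f == 0%VS & map f X = Y.
Proof.
move=> bX bY; have [/eqP spanX freeX] := andP bX; have [/eqP spanY freeY] := andP bY.
have [g gXY] := linear_of_free X Y.
pose f : 'End(vT) := linfun g.
have fXY : map f X = Y.
  rewrite -gXY //; first by apply: eq_map => x; rewrite lfunE.
  by rewrite -(eqnP freeX) -(eqnP freeY) spanX spanY.
exists f => //; have := limg_ker_dim f fullv.
rewrite capfv -[in (f @: _)%VS]spanX limg_span fXY spanY.
by rewrite -{2}[\dim fullv]add0n => /addIn /eqP; rewrite dimv_eq0.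
Qed.
End AdaptedBases.

Section Flags.
Variables (F : finFieldType) (n : nat).
Local Notation V := 'rV[F]_n.
Implicit Types (b : n.-tuple V) (Fam : {set subsp F n}).

Definition frames : {set n.-tuple V} := [set b : n.-tuple V | basis_of fullv b].

Definition flag b (i : nat) : subsp F n := <<take i b>>%VS.

Definition flag_hits Fam b : {set 'I_n.+1} := [set i : 'I_n.+1 | flag b i \in Fam].

Lemma dim_rV : \dim {:V} = n.
Proof. by rewrite dimvf /dim /= mul1n. Qed.

Lemma dim_subsp_le (U : subsp F n) : (\dim U <= n)%N.
Proof. by have := dimvS (subvf U); rewrite dim_rV. Qed.

Lemma basis_frame (X : seq V) : basis_of fullv X -> exists2 b, b \in frames & val b = X.
Proof.
move=> bX; have sizeX : size X == n.
  by have [/eqP spanX /eqnP <-] := andP bX; rewrite spanX dim_rV.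
by exists (Tuple sizeX); rewrite ?inE.
Qed.

Lemma frames_neq0 : frames != set0.
Proof.
by have [b fb _] := basis_frame (vbasisP fullv); apply/set0Pn; exists b.
Qed.

Lemma dim_flag b i : b \in frames -> (i <= n)%N -> \dim (flag b i) = i.
Proof.
by rewrite inE => /andP[_ freeb] le_in; rewrite dim_span_take ?size_tuple.
Qed.

Lemma flag_psubv b i j : b \in frames -> (i < j)%N -> (j <= n)%N ->
  psubv (flag b i) (flag b j).
Proof.
move=> fb lt_ij le_jn; rewrite /psubv span_take_subv ?(ltnW lt_ij) //=.
apply/eqP => eq_ij; move: (dim_flag fb le_jn).
rewrite -eq_ij dim_flag ?(ltnW (leq_trans lt_ij le_jn)) // => eq_ji.
by rewrite eq_ji ltnn in lt_ij.
Qed.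

Lemma flag_map (f : 'End(V)) b i : flag (map_tuple f b) i = (f @: flag b i)%VS.
Proof. by rewrite /flag limg_span map_take. Qed.

Lemma frames_map (f : 'End(V)) b :
  lker f == 0%VS -> b \in frames -> map_tuple f b \in frames.
Proof.
move=> kf0; rewrite !inE => bb; rewrite -(lker0_limgf kf0) limg_basis_of //.
by rewrite capfv; apply/eqP.
Qed.
End Flags.

Lemma nth_enum_ord_lt N (A : {set 'I_N.+1}) i j : (i < j)%N -> (j < #|A|)%N ->
  (nth ord0 (enum A) i < nth ord0 (enum A) j)%N.
Proof.
move=> lt_ij lt_jA; have size_enum : size (enum A) = #|A| by rewrite cardE.
have sorted_enum : sorted ltn (map val (enum A)).
  rewrite -[enum A](eq_filter (mem_enum _)) -(eq_filter (mem_map val_inj _)) -filter_map.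
  by rewrite (sorted_filter ltn_trans) // unlock val_ord_enum iota_ltn_sorted.
rewrite -!(nth_map ord0 0%N) ?size_enum ?(ltn_trans lt_ij) //.
by apply: (sorted_ltn_nth ltn_trans) => //;
  rewrite inE size_map size_enum ?(ltn_trans lt_ij).
Qed.

Section Chains.
Variables (F : finFieldType) (n : nat).
Implicit Types (U W : subsp F n).

Lemma psubvEdim U W : psubv U W = (U <= W)%VS && (\dim U < \dim W)%N.
Proof.
rewrite /psubv; case: (boolP (U <= W)%VS) => //= sUW.
by rewrite (ltn_leqif (dimv_leqif_eq sUW)).
Qed.

Lemma psubv_trans : transitive (@psubv F n).
Proof.
move=> W U Z; rewrite !psubvEdim => /andP[sUW ltUW] /andP[sWZ ltWZ].
by rewrite (subv_trans sUW sWZ) (ltn_trans ltUW ltWZ).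
Qed.

Lemma chain_psubv m (c : 'I_m -> subsp F n) : is_chain c ->
  {homo c : i j / (i < j)%N >-> psubv i j}.
Proof.
case: m c => [c _ [] // | m c /forallP ch i j lt_ij].
suff: {in [pred k | (k < m.+1)%N] &,
         {homo (fun k => c (inord k)) : a b / (a < b)%N >-> psubv a b}}.
  by move=> /(_ i j (ltn_ord i) (ltn_ord j) lt_ij); rewrite !inord_val.
apply: homo_ltn_in psubv_trans _ _ => [a b _ lt_bm k /andP[_ lt_kb] | k lt_km lt_k1m].
  exact: ltn_trans lt_kb lt_bm.
by have /forallP/(_ (inord k.+1)) := ch (inord k); rewrite !inordK // eqxx.
Qed.

Lemma chain_subv m (c : 'I_m -> subsp F n) : is_chain c ->
  {homo c : i j / (i <= j)%N >-> (i <= j)%VS}.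
Proof.
move=> ch i j; rewrite leq_eqVlt => /predU1P[/val_inj -> // | /(chain_psubv ch)].
by case/andP.
Qed.
End Chains.

Section ChainsOfType.
Variables (F : finFieldType) (n l : nat) (S : lsets n l).
Local Notation V := 'rV[F]_n.
Implicit Types (b : n.-tuple V) (Fam : {set subsp F n}) (c : {ffun 'I_l -> subsp F n}).

Definition lsets_nth (j : 'I_l) : 'I_n.+1 := nth ord0 (enum (val S)) j.

Lemma card_lsets : #|val S| = l.
Proof. exact/eqP/(valP S). Qed.

Lemma lsets_nth_lt (i j : 'I_l) : (i < j)%N -> (lsets_nth i < lsets_nth j)%N.
Proof. by move=> lt_ij; apply: nth_enum_ord_lt; rewrite ?card_lsets. Qed.

Lemma forall_lsets_nth (D : {set 'I_n.+1}) :
  [forall j, lsets_nth j \in D] = (val S \subset D).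
Proof.
have size_enum : size (enum (val S)) = l by rewrite -cardE card_lsets.
apply/forallP/subsetP => [D_S i | S_D j].
  rewrite -mem_enum => Si.
  have lt_il : (index i (enum (val S)) < l)%N by rewrite -index_mem size_enum in Si.
  by have := D_S (Ordinal lt_il); rewrite /lsets_nth nth_index.
by apply/S_D; rewrite -mem_enum mem_nth ?size_enum.
Qed.

Definition chains_of Fam : {set {ffun 'I_l -> subsp F n}} :=
  [set c : {ffun 'I_l -> subsp F n} |
    [&& [forall j, c j \in Fam], is_chain c & [forall j, \dim (c j) == lsets_nth j]]].

Lemma chain_countE Fam : chain_count Fam S = #|chains_of Fam|.
Proof. by []. Qed.

Lemma chains_ofE Fam c :
  (c \in chains_of Fam) = (c \in chains_of setT) && [forall j, c j \in Fam].
Proof.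
rewrite !inE.
have -> : [forall j, c j \in [set: subsp F n]] by apply/forallP => j; rewrite inE.
by rewrite /= andbC.
Qed.

Lemma chain_count_le Fam : (chain_count Fam S <= chain_count [set: subsp F n] S)%N.
Proof. by apply/subset_leq_card/subsetP => c; rewrite chains_ofE => /andP[]. Qed.

Definition flag_chain b : {ffun 'I_l -> subsp F n} := [ffun j => flag b (lsets_nth j)].

Lemma flag_chain_chain b : b \in frames F n -> flag_chain b \in chains_of setT.
Proof.
move=> fb; rewrite inE; apply/and3P; split; apply/forallP => i; rewrite ?inE //.
  apply/forallP => j; apply/implyP => /eqP ij; rewrite !ffunE flag_psubv //.
    by apply: lsets_nth_lt; rewrite -ij.
  by rewrite -ltnS.
by rewrite ffunE dim_flag // -ltnS.
Qed.

Lemma flag_chain_in Fam b : b \in frames F n ->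
  (flag_chain b \in chains_of Fam) = (val S \subset flag_hits Fam b).
Proof.
move=> fb; rewrite chains_ofE flag_chain_chain //= -forall_lsets_nth.
by apply: eq_forallb => j; rewrite ffunE [in RHS]inE.
Qed.

Lemma flag_chain_onto c :
  c \in chains_of setT -> exists2 b, b \in frames F n & flag_chain b = c.
Proof.
rewrite inE => /and3P[_ ch /forallP dim_c].
have sorted_c : sorted (fun U W : subsp F n => (U <= W)%VS) [seq c j | j <- enum 'I_l].
  rewrite sorted_map; apply: (@sub_sorted _ (fun i j : 'I_l => (i <= j)%N)).
    by move=> i j /(chain_subv ch).
  by have := iota_sorted 0 l; rewrite -val_enum_ord sorted_map.
have [X bX adX] := adapted_basis sorted_c; have [b fb valb] := basis_frame bX.
exists b => //; apply/ffunP => j; rewrite ffunE /flag valb -(eqP (dim_c j)).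
by rewrite adX // map_f ?mem_enum.
Qed.

Definition flag_fiber c : {set n.-tuple V} := [set b in frames F n | flag_chain b == c].

Lemma card_flag_fiber_le c c' : c \in chains_of setT -> c' \in chains_of setT ->
  (#|flag_fiber c| <= #|flag_fiber c'|)%N.
Proof.
move=> /flag_chain_onto[b0 fb0 <-] /flag_chain_onto[b0' fb0' <-].
have [f kf0 fb0E] : exists2 f : 'End(V), lker f == 0%VS & map_tuple f b0 = b0'.
  rewrite !inE in fb0 fb0'; have [f kf0 fb0E] := basis_transitive fb0 fb0'.
  by exists f => //; apply: val_inj.
have inj_map_f : injective (fun b : n.-tuple V => map_tuple f b).
  have /lker0P inj_f := kf0.
  by move=> b1 b2 /(congr1 val) /(inj_map inj_f) /val_inj.
rewrite -(card_imset _ inj_map_f); apply/subset_leq_card/subsetP => _ /imsetP[b + ->].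
case/setIdP=> fb /eqP chain_b; apply/setIdP; split; first exact: frames_map.
apply/eqP/ffunP => j; rewrite !ffunE -fb0E !flag_map.
by have := congr1 (fun c => c j) chain_b; rewrite !ffunE => ->.
Qed.

Lemma card_flag_fiber c c' : c \in chains_of setT -> c' \in chains_of setT ->
  #|flag_fiber c| = #|flag_fiber c'|.
Proof. by move=> Tc Tc'; apply/eqP; rewrite eqn_leq !card_flag_fiber_le. Qed.

Lemma card_flags_through Fam c0 : c0 \in chains_of setT ->
  (chain_count Fam S * #|flag_fiber c0|)%N =
  #|[set b in frames F n | val S \subset flag_hits Fam b]|.
Proof.
move=> Tc0; rewrite -[in RHS]sum1_card.
rewrite (partition_big flag_chain (mem (chains_of Fam))) /=; last first.
  by move=> b /setIdP[fb]; rewrite flag_chain_in.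
rewrite chain_countE -sum_nat_const; apply: eq_bigr => c Fc.
have Tc : c \in chains_of setT by rewrite chains_ofE in Fc; case/andP: Fc.
rewrite (card_flag_fiber Tc0 Tc) -sum1_card; apply: eq_bigl => b.
rewrite [b \in flag_fiber _]inE [b \in [set _ in _ | _]]inE.
case: (boolP (b \in frames F n)) => //= fb.
have [flag_b | _] := eqVneq (flag_chain b) c; rewrite ?andbT ?andbF //.
by rewrite -flag_chain_in // flag_b Fc.
Qed.
End ChainsOfType.

Section Levels.
Variables (F : finFieldType) (n : nat).
Local Notation V := 'rV[F]_n.
Implicit Types (D : {set 'I_n.+1}) (Fam : {set subsp F n}).

Definition levels D : {set subsp F n} :=
  [set U : subsp F n | [exists i in D, \dim U == i]].

Lemma mem_levels D (U : subsp F n) (i : 'I_n.+1) :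
  \dim U = i -> (U \in levels D) = (i \in D).
Proof.
move=> dimU; rewrite inE; apply/existsP/idP => [[i' /andP[i'D /eqP]] | iD].
  by rewrite dimU => /val_inj ->.
by exists i; rewrite iD dimU /=.
Qed.

Lemma chain_count_levels l D (S : lsets n l) :
  chain_count (levels D) S =
  if val S \subset D then chain_count [set: subsp F n] S else 0%N.
Proof.
have chain_levels c :
  c \in chains_of S setT -> [forall j, c j \in levels D] = (val S \subset D).
  rewrite inE => /and3P[_ _ /forallP dim_c]; rewrite -forall_lsets_nth.
  by apply: eq_forallb => j; apply/mem_levels/eqP.
rewrite !chain_countE; case: ifP => SD; [apply: eq_card | apply: eq_card0] => c;
  rewrite chains_ofE; case: (boolP (c \in chains_of S setT)) => //= /chain_levels ->;
  by rewrite SD ?inE.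
Qed.

Lemma flag_hits_setT (b : n.-tuple V) : flag_hits [set: subsp F n] b = setT.
Proof. by apply/setP => i; rewrite !inE. Qed.

Lemma chain_count_average l Fam (S : lsets n l) :
  (chain_count Fam S * #|frames F n|)%N =
  (\sum_(b in frames F n) chain_count (levels (flag_hits Fam b)) S)%N.
Proof.
have [b0 fb0] := set0Pn _ (frames_neq0 F n).
have Tc0 := flag_chain_chain S fb0.
have := card_flags_through [set: subsp F n] Tc0.
have -> : [set b in frames F n | val S \subset flag_hits setT b] = frames F n.
  by apply/setP => b; rewrite inE flag_hits_setT subsetT andbT.
move <-; rewrite mulnCA (card_flags_through Fam Tc0).
under eq_bigr => b _ do rewrite chain_count_levels.
by rewrite -big_mkcondr sum_nat_cond_const mulnC.
Qed.
End Levels.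

Section Sperner.
Variables (F : finFieldType) (n k : nat).

Lemma levels_k_Sperner (D : {set 'I_n.+1}) :
  (#|D| <= k)%N -> k_Sperner k (levels F D).
Proof.
move=> Dk [c [cD ch]]; pose g (i : 'I_k.+1) : 'I_n.+1 := inord (\dim (c i)).
have gE i : g i = \dim (c i) :> nat by rewrite inordK // ltnS dim_subsp_le.
have inj_g : injective g.
  move=> i j /(congr1 (@nat_of_ord _)); rewrite !gE => eq_dim; apply/val_inj.
  by case: (ltngtP i j) => // /(chain_psubv ch); rewrite psubvEdim eq_dim ltnn andbF.
have : (#|[set g i | i : 'I_k.+1]| <= #|D|)%N.
  apply/subset_leq_card/subsetP => _ /imsetP[i _ ->].
  by rewrite -(mem_levels D (esym (gE i))) cD.
by rewrite card_imset // card_ord => /leq_trans/(_ Dk); rewrite ltnn.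
Qed.

Lemma card_flag_hits (Fam : {set subsp F n}) b :
  k_Sperner k Fam -> b \in frames F n -> (#|flag_hits Fam b| <= k)%N.
Proof.
move=> spF fb; rewrite leqNgt; apply/negP => lt_k; apply: spF.
pose d (i : 'I_k.+1) := nth ord0 (enum (flag_hits Fam b)) i.
have lt_hits (i : 'I_k.+1) : (i < #|flag_hits Fam b|)%N := leq_trans (ltn_ord i) lt_k.
exists (fun i => flag b (d i)); split.
  move=> i; have : d i \in flag_hits Fam b by rewrite -mem_enum mem_nth // -cardE.
  by rewrite inE.
apply/forallP => i; apply/forallP => j; apply/implyP => /eqP ij.
apply: flag_psubv => //; last by rewrite -ltnS.
by apply: nth_enum_ord_lt (lt_hits j); rewrite -ij.
Qed.
End Sperner.

Section Polytope.
Variables (R : realType) (F : finFieldType) (n k l : nat).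
Local Notation fams := {set subsp F n}.
Local Notation profile := (@profile F n R l).
Local Notation polytope := (@profile_polytope F n R k l).
Implicit Types (Fam G : fams).

(* The law of [levels (flag_hits Fam b)] for a uniformly random frame [b]. *)
Definition level_weights Fam G : R :=
  #|[set b in frames F n | levels F (flag_hits Fam b) == G]|%:R / #|frames F n|%:R.

Lemma card_frames_neq0 : #|frames F n|%:R != 0 :> R.
Proof. by rewrite pnatr_eq0 -lt0n card_gt0 frames_neq0. Qed.

Lemma sum_level_weights Fam (g : fams -> R) :
  \sum_G level_weights Fam G * g G =
  #|frames F n|%:R^-1 * \sum_(b in frames F n) g (levels F (flag_hits Fam b)).
Proof.
rewrite (sum_card_fibers _ (fun b => levels F (flag_hits Fam b))) mulr_sumr.
by apply: eq_bigr => G _; rewrite mulrA [_^-1 * _]mulrC.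
Qed.

Lemma level_weights_distr Fam :
  k_Sperner k Fam -> distr_on (union_of_levels k) (level_weights Fam).
Proof.
move=> spF; split=> [G | | G].
- by rewrite divr_ge0 ?ler0n.
- under eq_bigr do rewrite -[level_weights _ _]mulr1.
  by rewrite sum_level_weights sumr_const mulVf ?card_frames_neq0.
- rewrite mulf_eq0 negb_or pnatr_eq0 -lt0n.
  case/andP=> /card_gt0P[b /setIdP[fb /eqP <-]] _.
  by exists (flag_hits Fam b); split; first exact: card_flag_hits.
Qed.

Lemma profile_level_mixture Fam : profile Fam = mixture profile (level_weights Fam).
Proof.
apply/ffunP => S; rewrite !ffunE (sum_level_weights Fam (fun G => profile G S)).
under eq_bigr do rewrite ffunE.
by rewrite -natr_sum -chain_count_average natrM mulrCA mulVf ?mulr1 ?card_frames_neq0.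
Qed.

Lemma polytopeP x :
  polytope x <-> exists2 w, distr_on (k_Sperner k) w & x = mixture profile w.
Proof.
split=> [[w [w0 wS w1 xE]] | [w [w0 w1 wS] ->]].
  exists w; last by apply/ffunP => S; rewrite xE ffunE.
  split=> // G /eqP nzG chainG; apply: nzG; apply: wS => spG; exact: spG chainG.
exists [ffun G => w G]; split=> [G | G nspG | | S]; rewrite ?ffunE //.
- by apply/eqP/contraT => /wS /nspG.
- by under eq_bigr do rewrite ffunE.
- by apply: eq_bigr => G _; rewrite !ffunE.
Qed.

Lemma union_of_levels_k_Sperner G : union_of_levels k G -> k_Sperner k G.
Proof. by case=> D [Dk ->]; apply: levels_k_Sperner. Qed.

Lemma level_mixture_in_polytope w :
  distr_on (union_of_levels k) w -> polytope (mixture profile w).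
Proof.
move=> dw; apply/polytopeP; exists w => //.
exact: distr_on_sub union_of_levels_k_Sperner dw.
Qed.

Lemma polytope_level_mixture x : polytope x ->
  exists2 w, distr_on (union_of_levels k) w & x = mixture profile w.
Proof.
case/polytopeP => w dw ->; exists (fun G => \sum_Fam w Fam * level_weights Fam G).
  exact: distr_on_comp dw level_weights_distr.
exact: mixture_comp profile_level_mixture.
Qed.

Lemma polytope_bound y S :
  polytope y -> 0 <= y S <= (chain_count [set: subsp F n] S)%:R.
Proof.
case/polytopeP => w dw ->; apply: mixture_bound dw _ => G _.
by rewrite ffunE ler0n ler_nat chain_count_le.
Qed.

Lemma profile_levels_extreme (D : {set 'I_n.+1}) :
  (#|D| <= k)%N -> extreme_point polytope (profile (levels F D)).
Proof.
move=> Dk; apply: (extreme_box_vertex (u := fun S => (chain_count [set: subsp F n] S)%:R)).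
- rewrite -mixture_dirac; apply/level_mixture_in_polytope/distr_on_dirac.
  by exists D.
- by move=> y /polytope_bound.
- by move=> S; rewrite ffunE chain_count_levels; case: ifP; [right | left].
Qed.
End Polytope.

Theorem corollary4p2 (R : realType) (F : finFieldType) (n k l : nat) :
  (0 < n)%N -> (0 < k)%N -> (0 < l)%N ->
  forall x : {ffun lsets n l -> R},
    extreme_point (@profile_polytope F n R k l) x <->
    exists Fam : {set subsp F n}, union_of_levels k Fam /\ x = @profile F n R l Fam.
Proof.
move=> _ _ _ x; split=> [ext | [_ [[D [Dk ->]] ->]]]; last exact: profile_levels_extreme.
have [w dw xE] := polytope_level_mixture ext.1.
have [G UG ->] := extreme_mixture (@level_mixture_in_polytope R F n k l) ext dw xE.
by exists G.
Qed.
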